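(* Let $k,\ell,m$ be integers with $k>\ell\ge1$ and $m\ge1$, and let $w=a^kba^\ell b^m$. For $n\ge1$ let $S_n = a^kba^\ell a^{k}b a^{\ell}b^{m} (a^k b^{m+1}a^\ell)^n a^{k}b a^{\ell}b^{m} b^m$. Then every $S_n$ belongs to $L^{\epsilon}_{\vdash_{\{w\}}}$ and for all $1\le i<j$, $S_i\not\vdash^*_{\{w\}} S_j$; in particular $\vdash^*_{\{w\}}$ is not a well quasi-order on $L^{\epsilon}_{\vdash_{\{w\}}}$.
   Context: For words $u,v$, the shuffle $u \sqcup\!\sqcup v$ is the set of all words $u_1v_1\cdots u_kv_k$ with $k\ge 1$, $u=u_1\cdots u_k$, $v=v_1\cdots v_k$ (pieces possibly empty). For a finite set $I$ of words, $v \vdash_I w$ means $w \in v \sqcup\!\sqcup u$ for some $u\in I$; $\vdash_I^*$ is its reflexive-transitive closure and $L^{\epsilon}_{\vdash_I}=\{w : \epsilon \vdash_I^* w\}$. A quasi-order $\le$ on $S$ is a well quasi-order iff every infinite sequence $s_1,s_2,\dots$ in $S$ has $i<j$ with $s_i\le s_j$. *)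

From mathcomp Require Import all_boot.
Set Implicit Arguments. Unset Strict Implicit. Unset Printing Implicit Defensive.

Definition word := seq bool.
Definition la : bool := false.
Definition lb : bool := true.

Definition pw (x : bool) (n : nat) : word := nseq n x.

Definition shuffle (u v w : word) : Prop :=
  exists (us vs : seq word),
    [/\ 1 <= size us, size us = size vs,
        flatten us = u, flatten vs = v &
        w = flatten [seq p.1 ++ p.2 | p <- zip us vs]].

Definition step (I : word -> Prop) (v w : word) : Prop :=
  exists u, I u /\ shuffle v u w.

Inductive rtc (R : word -> word -> Prop) : word -> word -> Prop :=
| rtc_refl x : rtc R x x
| rtc_step x y z : R x y -> rtc R y z -> rtc R x z.

Definition derives (I : word -> Prop) := rtc (step I).

Definition Leps (I : word -> Prop) (w : word) : Prop := derives I [::] w.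

Definition wqo_on (S : word -> Prop) (le : word -> word -> Prop) : Prop :=
  forall s : nat -> word, (forall n, S (s n)) ->
    exists i j, i < j /\ le (s i) (s j).

From mathcomp Require Import all_boot zify.
Set Implicit Arguments. Unset Strict Implicit. Unset Printing Implicit Defensive.

(* [a^k b a^l X^n b^m], with [X = a^k b^m.+1 a^l], arises from [w] by repeatedly
   inserting [w] split as [(a^k b)(a^l b^m)] around the final [b^m]; two more
   insertions of [w] give [S_n].

   A derivation [S_i |-* S_j] makes [S_j] a shuffle of [S_i] and of [j - i]
   inserted copies of [w], and [S_i] is itself a shuffle of copies of [w]. Cut
   [S_j] after its prefix [a^k b a^l a^k b a^l b^m X^t a^k b^m.+1] ([t < j]):
   its letter counts are those of [w^(t+2) a^k b], which forces every copy of
   [w] to be cut after [eps], [a^k b] or [w] itself. As every nonempty proper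
   prefix [u] of [S_i] has [(k+l)|u|_b < (m+1)|u|_a], the number [U] of complete
   copies inside [S_i] is [0] or [i+3] if the copy cut after [a^k b] is an
   inserted one, and is [<> 1] and [<= i+1] otherwise. From [t] to [t+1] exactly
   one more copy in total completes, so [U] never exceeds [i+1] and never takes
   the value [1]. If [U = 0] at [t = 0] it stays [0], and the [j+1] complete
   copies at [t = j-1] would all be among the [j - i] inserted ones; otherwise
   [U >= 2] throughout, the copy cut after [a^k b] is always in [S_i], no
   inserted copy ever completes, and [S_i] would have to contain [j+1 > i+1]
   complete copies. *)

Section Interleavings.
Variable T : eqType.
Implicit Types (x y z : seq T) (ws : seq (seq T)) (zl : seq (T * nat)).

Inductive interleave : seq T -> seq T -> seq T -> Prop :=
| interleave_nil : interleave [::] [::] [::]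
| interleave_l c x y z : interleave x y z -> interleave (c :: x) y (c :: z)
| interleave_r c x y z : interleave x y z -> interleave x (c :: y) (c :: z).

Lemma interleave_catl x1 x y z : interleave x y z -> interleave (x1 ++ x) y (x1 ++ z).
Proof. by elim: x1 => //= c x1 IH /IH; apply: interleave_l. Qed.

Lemma interleave_catr y1 x y z : interleave x y z -> interleave x (y1 ++ y) (y1 ++ z).
Proof. by elim: y1 => //= c y1 IH /IH; apply: interleave_r. Qed.

(* A tagging [zl] of [z] records, for each letter of [z], the index in [ws] of
   the word it comes from; [labelling z zl ws] says that [z] is thereby a
   shuffle of the words of [ws]. *)
Definition label_proj (i : nat) zl : seq T := [seq p.1 | p <- zl & p.2 == i].

Definition labelling z zl ws :=
  [/\ map fst zl = z, all (fun p => p.2 < size ws) zl &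
      forall i, label_proj i zl = nth [::] ws i].

Definition consumed zl i b := size (label_proj i (take b zl)).

Lemma labelling_nil : labelling [::] [::] [::].
Proof. by split=> // i; rewrite nth_nil. Qed.

Lemma labelling_single z : labelling z [seq (c, 0) | c <- z] [:: z].
Proof.
split; first by rewrite -map_comp map_id.
  by apply/allP => p /mapP[c _ ->].
case=> [|i]; rewrite /label_proj /=; first by elim: z => //= c z ->.
by rewrite nth_nil; elim: z.
Qed.

Lemma label_proj_cons i p zl :
  label_proj i (p :: zl) = if p.2 == i then p.1 :: label_proj i zl else label_proj i zl.
Proof. by rewrite /label_proj /=; case: ifP. Qed.

Lemma label_proj_cat i zl1 zl2 :
  label_proj i (zl1 ++ zl2) = label_proj i zl1 ++ label_proj i zl2.
Proof. by rewrite /label_proj filter_cat map_cat. Qed.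

Lemma label_proj_take i b zl :
  label_proj i (take b zl) = take (consumed zl i b) (label_proj i zl).
Proof. by rewrite -{3}(cat_take_drop b zl) label_proj_cat take_size_cat. Qed.

Lemma interleave_tag v y z : interleave v y z -> forall zl n,
  map fst zl = v -> all (fun p => p.2 < n) zl ->
  exists zl', [/\ map fst zl' = z, all (fun p => p.2 <= n) zl',
    forall i, i != n -> label_proj i zl' = label_proj i zl & label_proj n zl' = y].
Proof.
elim=> {v y z} [|c x y z _ IH|c x y z _ IH].
- by case=> // n _ _; exists [::].
- case=> // p zl n /= [<- /IH{}IH] /andP[hp /IH[zl' [<- h2 h3 h4]]].
  exists (p :: zl'); split => /=.
  + by [].
  + by rewrite h2 andbT ltnW.
  + by move=> i hi; rewrite !label_proj_cons h3.
  + by rewrite label_proj_cons h4 ifN_eq // ltn_eqF.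
- move=> zl n hx hall; have [zl' [<- h2 h3 h4]] := IH zl n hx hall.
  exists ((c, n) :: zl'); split => /=; first by [].
  + by rewrite leqnn h2.
  + by move=> i hi; rewrite label_proj_cons h3 // eq_sym (negbTE hi).
  + by rewrite label_proj_cons eqxx h4.
Qed.

Lemma labelling_interleave v y z zl ws : interleave v y z -> labelling v zl ws ->
  exists zl', labelling z zl' (rcons ws y).
Proof.
move=> hvz [h1 h2 h3]; have [zl' [e1 e2 e3 e4]] := interleave_tag hvz h1 h2.
exists zl'; split => //.
- by apply/allP => p /(allP e2); rewrite size_rcons ltnS.
- move=> i; rewrite nth_rcons; have [->|hi] := eqVneq i (size ws).
    by rewrite ltnn ?eqxx e4.
  by rewrite e3 // h3; case: ltnP => // /(nth_default [::]).
Qed.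

Lemma count_label_proj_le c i zl :
  count_mem c (label_proj i zl) <= count_mem c (map fst zl).
Proof. by rewrite !count_map count_filter; apply: sub_count => p /andP[]. Qed.

Lemma count_labelling c zl n : all (fun p => p.2 < n) zl ->
  count_mem c (map fst zl) = \sum_(i <- iota 0 n) count_mem c (label_proj i zl).
Proof.
elim: zl => [|p zl IH] /=; first by rewrite big1_seq.
case/andP=> hp /IH ->; have hpn : p.2 \in iota 0 n by rewrite mem_iota.
rewrite !(bigD1_seq p.2 hpn (iota_uniq 0 n)) label_proj_cons eqxx /= addnA.
by congr (_ + _); apply: eq_bigr => i hi; rewrite label_proj_cons eq_sym (negbTE hi).
Qed.

Lemma count_take_labelling z zl ws c b : labelling z zl ws ->
  count_mem c (take b z) =
  \sum_(i <- iota 0 (size ws)) count_mem c (take (consumed zl i b) (nth [::] ws i)).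
Proof.
case=> <- h2 h3; rewrite -map_take (@count_labelling c _ (size ws)).
  by apply: eq_bigr => i _; rewrite label_proj_take h3.
by apply/allP => p /mem_take /(allP h2).
Qed.

Lemma consumed_mono zl i b b' : b <= b' -> consumed zl i b <= consumed zl i b'.
Proof.
move=> hb; rewrite /consumed -(take_takel zl hb) (label_proj_take i b (take b' zl)).
by rewrite size_take; case: ltnP => // /ltnW.
Qed.

Lemma consumed_le_size z zl ws i b : labelling z zl ws ->
  consumed zl i b <= size (nth [::] ws i).
Proof.
case=> _ _ h3; rewrite -h3 /consumed -{2}(cat_take_drop b zl) label_proj_cat.
by rewrite size_cat leq_addr.
Qed.

Lemma labelling_window z zl ws p q r i c : labelling z zl ws -> z = p ++ q ++ r ->
  count_mem c (take (consumed zl i (size p + size q)) (nth [::] ws i)) <=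
  count_mem c (take (consumed zl i (size p)) (nth [::] ws i)) + count_mem c q.
Proof.
move=> [h1 _ h3] hz; rewrite -h3 -!label_proj_take takeD label_proj_cat count_cat leq_add2l.
apply: leq_trans (count_label_proj_le _ _ _) _.
by rewrite map_take map_drop h1 hz drop_size_cat // take_size_cat.
Qed.

End Interleavings.

Lemma shuffle_interleave u v z : shuffle u v z -> interleave u v z.
Proof.
case=> us [vs] [_ hs <- <- ->].
elim: us vs hs => [|u0 us IH] [|v0 vs] //=; first by move=> _; exact: interleave_nil.
by move=> [hs]; rewrite -catA; apply/interleave_catl/interleave_catr/IH.
Qed.

Lemma rtc_snoc R x y z : rtc R x y -> R y z -> rtc R x z.
Proof.
elim=> [x0|x0 y0 z0 Hxy _ IH] Hyz; last exact: rtc_step Hxy (IH Hyz).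
exact: rtc_step Hyz (rtc_refl _ _).
Qed.

Lemma derives_labelling (w u v : word) : derives (fun u => u = w) u v ->
  forall ws zl, labelling u zl ws -> exists d zl', labelling v zl' (ws ++ nseq d w).
Proof.
elim=> [x ws zl H|x y z [_ [-> /shuffle_interleave hsh]] _ IH ws zl H].
  by exists 0, zl; rewrite cats0.
have [zl' /IH [d [zl'' H'']]] := labelling_interleave hsh H.
by exists d.+1, zl''; rewrite -cats1 -catA in H''.
Qed.

Lemma count_take_cat (T : eqType) (c : T) n (x y : seq T) :
  count_mem c (take n (x ++ y)) = count_mem c (take n x) + count_mem c (take (n - size x) y).
Proof.
rewrite take_cat; case: ltnP => h; last by rewrite count_cat (take_oversize h).
have /eqP -> : n - size x == 0 by rewrite subn_eq0 ltnW.
by rewrite take0 addn0.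
Qed.

Lemma count_take_nseq (T : eqType) (c d : T) r n :
  count_mem c (take r (nseq n d)) = (d == c) * minn r n.
Proof. by elim: n r => [|n IH] [|r] //=; rewrite ?minn0 ?muln0 // IH minnSS mulnS. Qed.

Lemma count_take_le (T : eqType) (c : T) r s : count_mem c (take r s) <= count_mem c s.
Proof. by rewrite -{2}(cat_take_drop r s) count_cat leq_addr. Qed.

Lemma count_take_mono (T : eqType) (c : T) r r' s : r <= r' ->
  count_mem c (take r s) <= count_mem c (take r' s).
Proof. by move=> h; rewrite -(take_takel s h) count_take_le. Qed.

Lemma flatten_nseqSr (T : Type) n (s : seq T) :
  flatten (nseq n.+1 s) = flatten (nseq n s) ++ s.
Proof. by rewrite -addn1 nseqD flatten_cat /= cats0. Qed.

Lemma sum_nat_of_bool (T : Type) (P : pred T) (s : seq T) :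
  \sum_(x <- s) (P x : nat) = count P s.
Proof. by elim: s => [|x s IH]; rewrite ?big_nil ?big_cons ?IH. Qed.

Lemma leq_sum_eq (f g : nat -> nat) (s : seq nat) :
  {in s, forall x, f x <= g x} -> \sum_(x <- s) f x = \sum_(x <- s) g x ->
  {in s, f =1 g}.
Proof.
elim: s => [|y s IH] //= hle; rewrite !big_cons => E x.
have hy : f y <= g y by apply: hle; rewrite mem_head.
have hs : {in s, forall x, f x <= g x} by move=> z hz; apply: hle; rewrite inE hz orbT.
have : \sum_(z <- s) f z <= \sum_(z <- s) g z.
  by rewrite big_seq_cond [leqRHS]big_seq_cond leq_sum // => z /andP[/hs].
rewrite inE => hsum /orP[/eqP ->|]; first by lia.
by apply: IH; [exact: hs | lia].
Qed.

Lemma count_map_lt (T R : eqType) (f g : T -> R) (s : seq T) v :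
  count_mem v (map f s) < count_mem v (map g s) ->
  exists2 x, x \in s & g x = v /\ f x != v.
Proof.
elim: s => [|x s IH] //=.
case: (eqVneq (g x) v) => [eg|ng]; case: (eqVneq (f x) v) => [ef|nf] /=;
  rewrite ?add1n ?add0n ?ltnS => h.
- by have [y hy hy2] := IH h; exists y => //; rewrite inE hy orbT.
- by exists x; rewrite ?inE ?eqxx.
- by have [y hy hy2] := IH (ltnW h); exists y => //; rewrite inE hy orbT.
- by have [y hy hy2] := IH h; exists y => //; rewrite inE hy orbT.
Qed.

Lemma step_insert2 (w1 w2 u1 u2 : word) :
  step (fun u => u = w1 ++ w2) (u1 ++ u2) (u1 ++ w1 ++ u2 ++ w2).
Proof.
exists (w1 ++ w2); split => //.
by exists [:: u1; u2], [:: w1; w2]; split; rewrite //= ?cats0 -?catA.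
Qed.

Section Words.
Variables k l m : nat.

Definition w : word := pw la k ++ [:: lb] ++ pw la l ++ pw lb m.
Definition X : word := pw la k ++ pw lb m.+1 ++ pw la l.

Definition Sword n : word :=
  pw la k ++ [:: lb] ++ pw la l ++ pw la k ++ [:: lb] ++ pw la l ++ pw lb m
  ++ flatten (nseq n X) ++ pw la k ++ [:: lb] ++ pw la l ++ pw lb m ++ pw lb m.

Definition w_pumped n : word := pw la k ++ [:: lb] ++ pw la l ++ flatten (nseq n X) ++ pw lb m.

Lemma derives_w_pumped n : derives (fun u => u = w) [::] (w_pumped n).
Proof.
elim: n => [|n IH].
  apply: rtc_step (rtc_refl _ _); exists w; split => //.
  by exists [:: [::]], [:: w]; split; rewrite //= cats0.
apply: rtc_snoc IH _.
pose u := pw la k ++ [:: lb] ++ pw la l ++ flatten (nseq n X).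
have -> : w = (pw la k ++ [:: lb]) ++ (pw la l ++ pw lb m) by rewrite /w -!catA.
have -> : w_pumped n = u ++ pw lb m by rewrite /w_pumped /u -!catA.
have -> : w_pumped n.+1 = u ++ (pw la k ++ [:: lb]) ++ pw lb m ++ (pw la l ++ pw lb m).
  by rewrite /w_pumped /u flatten_nseqSr /X /pw -!catA.
exact: step_insert2.
Qed.

Lemma derives_Sword n : derives (fun u => u = w) [::] (Sword n).
Proof.
pose A := pw la k ++ [:: lb] ++ pw la l; pose B := flatten (nseq n X).
have hw : w = w ++ [::] by rewrite cats0.
have s1 := step_insert2 w [::] (A ++ B) (pw lb m).
have s2 := step_insert2 w [::] A (B ++ w ++ pw lb m).
rewrite -hw in s1 s2; apply: rtc_snoc (rtc_snoc (derives_w_pumped n) _) _.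
- have -> : w_pumped n = (A ++ B) ++ pw lb m by rewrite /w_pumped /A /B -!catA.
  exact: s1.
- have -> : Sword n = A ++ w ++ (B ++ w ++ pw lb m) ++ [::].
    by rewrite cats0 /Sword /A /B /w /X -!catA.
  by move: s2; rewrite !cats0 -!catA.
Qed.

Hypotheses (hlk : l < k) (hl : 0 < l) (hm : 0 < m).

Definition K := k + l + m + 1.
Definition acount_w s := count_mem la (take s w).
Definition bcount_w s := count_mem lb (take s w).

Lemma size_w : size w = K.
Proof. by rewrite /w /pw !size_cat !size_nseq /K /=; lia. Qed.

Lemma acount_wE s : acount_w s = minn s k + minn (s - k.+1) l.
Proof.
rewrite /acount_w /w /pw -[[:: lb]]/(nseq 1 lb).
by rewrite !count_take_cat !count_take_nseq ?size_nseq /=; lia.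
Qed.

Lemma bcount_wE s : bcount_w s = minn (s - k) 1 + minn (s - k.+1 - l) m.
Proof.
rewrite /bcount_w /w /pw -[[:: lb]]/(nseq 1 lb).
by rewrite !count_take_cat !count_take_nseq ?size_nseq /=; lia.
Qed.

Lemma bcount_w_mono s s' : s <= s' -> bcount_w s <= bcount_w s'.
Proof. by rewrite !bcount_wE; lia. Qed.

Section Rigidity.

(* [full s] and [half s] over-approximate [s = K] and [s = k.+1]; the two bounds
   below hold for all prefixes and are tight exactly on the lengths 0, k.+1, K. *)
Let full s := 2 <= bcount_w s.
Let half s := bcount_w s == 1.

Lemma w_prefix_bounds s : s <= K ->
  bcount_w s <= m.+1 * full s + half s /\ (k + l) * full s + k * half s <= acount_w s.
Proof. by rewrite /full /half acount_wE bcount_wE /K; case: leqP; case: eqP; lia. Qed.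

Lemma w_prefix_tight s : s <= K ->
  bcount_w s = m.+1 * full s + half s -> (k + l) * full s + k * half s = acount_w s ->
  [/\ (s == 0) || (s == k.+1) || (s == K), full s = (s == K) & half s = (s == k.+1)].
Proof.
move=> hs e1 e2; have [->|[->|->]] : s = 0 \/ s = k.+1 \/ s = K.
  move: e1 e2; rewrite /full /half acount_wE bcount_wE /K in hs *.
  by case: leqP; case: eqP; lia.
all: rewrite /full /half bcount_wE /K; split; first by rewrite ?eqxx ?orbT.
all: by apply/idP/idP; lia.
Qed.

Lemma full_half_count T F C : T.+1 * m.+1 + 1 <= m.+1 * F + C ->
  (k + l) * F + k * C <= T.+1 * (k + l) + k -> F = T.+1 /\ C = 1.
Proof.
move=> H1 H2; have hF : T.+1 <= F.
  rewrite leqNgt; apply/negP => /subnKC hD; move: H1 H2; rewrite -hD.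
  move: (F - T.+2) => D H1 H2; nia.
suff eF : F = T.+1 by subst F; split=> //; nia.
apply/eqP; rewrite eqn_leq hF andbT leqNgt; apply/negP => hlt.
have : (k + l) * T.+2 <= (k + l) * F by rewrite leq_mul2l hlt orbT.
nia.
Qed.

Lemma w_prefixes_rigid (L : seq nat) T : all (fun s => s <= K) L ->
  \sum_(s <- L) acount_w s = T.+1 * (k + l) + k ->
  \sum_(s <- L) bcount_w s = T.+1 * m.+1 + 1 ->
  [/\ all (fun s => (s == 0) || (s == k.+1) || (s == K)) L,
      count_mem K L = T.+1 & count_mem k.+1 L = 1].
Proof.
move=> /allP hK hA hB.
have hbnd s (hs : s \in L) := w_prefix_bounds (hK s hs).
have sB : \sum_(s <- L) (m.+1 * full s + half s) = m.+1 * count full L + count half L.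
  by rewrite big_split -big_distrr /= !sum_nat_of_bool.
have sA : \sum_(s <- L) ((k + l) * full s + k * half s) =
           (k + l) * count full L + k * count half L.
  by rewrite big_split -!big_distrr /= !sum_nat_of_bool.
have [eF eC] : count full L = T.+1 /\ count half L = 1.
  apply: full_half_count; first rewrite -hB -sB.
    by rewrite big_seq_cond [leqRHS]big_seq_cond leq_sum // => s /andP[/hbnd[]].
  by rewrite -hA -sA big_seq_cond [leqRHS]big_seq_cond leq_sum // => s /andP[/hbnd[]].
have eB : {in L, forall s, bcount_w s = m.+1 * full s + half s}.
  by apply: leq_sum_eq => [s /hbnd[]//|]; rewrite hB sB eF eC; lia.
have eA : {in L, forall s, (k + l) * full s + k * half s = acount_w s}.
  by apply: leq_sum_eq => [s /hbnd[]//|]; rewrite hA sA eF eC; lia.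
have tight s (hs : s \in L) := w_prefix_tight (hK s hs) (eB s hs) (eA s hs).
split.
- by apply/allP => s /tight[].
- by rewrite -eF; apply/esym/eq_in_count => s /tight[].
- by rewrite -eC; apply/esym/eq_in_count => s /tight[].
Qed.

End Rigidity.

Local Notation acount s := (count_mem la s).
Local Notation bcount s := (count_mem lb s).

(* Every letter [a] earns [m.+1] and every [b] costs [k + l]; [solvent c x]
   says that, starting with credit [c], the credit is positive after each
   nonempty prefix of [x]. *)
Definition solvent c (x : word) := forall r, 0 < r <= size x ->
  (k + l) * bcount (take r x) < c + m.+1 * acount (take r x).

Lemma solvent_nil c : solvent c [::].
Proof. by move=> r /andP[/prednK <-]. Qed.

Lemma solvent_cat c c' x y : solvent c x ->
  c' + (k + l) * bcount x = c + m.+1 * acount x -> solvent c' y -> solvent c (x ++ y).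
Proof.
move=> hx ex hy r /andP[r0 hr]; rewrite take_cat.
case: (ltnP r (size x)) => hxr; first by apply: hx; rewrite r0 ltnW.
have [e|r'0] := posnP (r - size x).
  by move: (hx r); rewrite e take0 cats0 (take_oversize hxr) r0; apply; lia.
have := hy (r - size x); rewrite size_cat in hr; rewrite !count_cat !mulnDr r'0.
by move: ex; lia.
Qed.

Lemma solvent_cat_a c n y : solvent (c + m.+1 * n) y -> solvent c (nseq n la ++ y).
Proof.
apply: solvent_cat; last by rewrite !count_nseq /=; lia.
by move=> r; rewrite size_nseq !count_take_nseq /=; lia.
Qed.

Lemma solvent_cat_b c n y : (k + l) * n < c ->
  solvent (c - (k + l) * n) y -> solvent c (nseq n lb ++ y).
Proof.
move=> hn; apply: solvent_cat; last by rewrite !count_nseq /=; lia.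
move=> r; rewrite size_nseq !count_take_nseq /= mul1n mul0n muln0 addn0 => _.
by rewrite (leq_ltn_trans _ hn) // leq_mul2l geq_minr orbT.
Qed.

Lemma solvent_cat_X c y : m.+1 * l < c -> solvent c y -> solvent c (X ++ y).
Proof.
move=> hc hy; rewrite /X /pw -!catA; apply: solvent_cat_a.
apply: solvent_cat_b; first lia.
by apply: solvent_cat_a; have -> : c + m.+1 * k - (k + l) * m.+1 + m.+1 * l = c by lia.
Qed.

Lemma solvent_cat_Xs c n y : m.+1 * l < c -> solvent c y ->
  solvent c (flatten (nseq n X) ++ y).
Proof. by move=> hc hy; elim: n => //= n IH; rewrite -catA; apply: solvent_cat_X. Qed.

Definition Shead : word :=
  pw la k ++ [:: lb] ++ pw la l ++ pw la k ++ [:: lb] ++ pw la l ++ pw lb m.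
Definition Stail : word := pw la k ++ [:: lb] ++ pw la l ++ pw lb m ++ pw lb m.

Lemma SwordE n : Sword n = Shead ++ flatten (nseq n X) ++ Stail.
Proof. by rewrite /Sword /Shead /Stail -!catA. Qed.

(* [Sword n] ends with [b] and has credit 0, so only its proper prefixes are
   solvent. *)
Lemma Sword_proper_prefix n r : 0 < r < size (Sword n) ->
  (k + l) * bcount (take r (Sword n)) < m.+1 * acount (take r (Sword n)).
Proof.
pose S' := Shead ++ flatten (nseq n X) ++
  pw la k ++ [:: lb] ++ pw la l ++ pw lb m ++ pw lb m.-1.
have hpm : pw lb m = pw lb m.-1 ++ [:: lb].
  by rewrite /pw -[in LHS](prednK hm) -addn1 nseqD.
have eS : Sword n = S' ++ [:: lb] by rewrite SwordE /Stail /S' hpm -!catA.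
rewrite eS size_cat addn1 ltnS => /andP[r0 hr]; rewrite takel_cat //.
suff : solvent 0 S' by apply; rewrite r0.
rewrite /S' /Shead /pw -[[:: lb]]/(nseq 1 lb) -(cats0 (nseq m.-1 lb)) -!catA.
by do ![apply: solvent_cat_a | apply: solvent_cat_b; first nia
       | apply: solvent_cat_Xs; first nia | exact: solvent_nil].
Qed.

Lemma count_Xs n :
  acount (flatten (nseq n X)) = n * (k + l) /\ bcount (flatten (nseq n X)) = n * m.+1.
Proof.
elim: n => [|n [ea eb]] //=; rewrite !count_cat ea eb /X /pw !count_nseq /=.
by split; lia.
Qed.

Lemma count_Sword n : acount (Sword n) = n.+3 * (k + l) /\ bcount (Sword n) = n.+3 * m.+1.
Proof.
have [ea eb] := count_Xs n.
by rewrite /Sword /pw !count_cat ea eb !count_nseq /=; split; lia.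
Qed.

Lemma count_Shead : acount Shead = (k + l) * 2 /\ bcount Shead = m.+2.
Proof. by rewrite /Shead /pw !count_cat !count_nseq /=; split; lia. Qed.

(* [(k + l) * U + k] and [m.+1 * U + 1] are the letter counts of [w^U a^k b]. *)
Lemma Sword_prefix_half_counts n r U :
  acount (take r (Sword n)) = (k + l) * U + k -> bcount (take r (Sword n)) = m.+1 * U + 1 ->
  U != 1 /\ U != n.+2.
Proof.
have [ha hb] := count_Shead; have [ea eb] := count_Xs n.
rewrite SwordE => hA hB; split; apply/eqP => hU; move: hA hB; rewrite hU.
  rewrite take_cat; case: (ltnP r (size Shead)) => hr; last by rewrite count_cat ha; lia.
  move: hr; rewrite /Shead /pw -[[:: lb]]/(nseq 1 lb).
  by rewrite !count_take_cat !count_take_nseq ?size_cat ?size_nseq /=; lia.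
have eA : acount (Shead ++ flatten (nseq n X)) = (k + l) * n.+2.
  by rewrite count_cat ha ea; nia.
have eB : bcount (Shead ++ flatten (nseq n X)) = m.+1 * n.+1 + 1.
  by rewrite count_cat hb eb; nia.
rewrite catA take_cat; case: (ltnP r (size (Shead ++ flatten (nseq n X)))) => hr.
  by move=> hA _; have := count_take_le la r (Shead ++ flatten (nseq n X)); rewrite hA eA; lia.
rewrite [acount _]count_cat [bcount _]count_cat eA eB /Stail /pw -[[:: lb]]/(nseq 1 lb).
by rewrite !count_take_cat !count_take_nseq ?size_cat ?size_nseq /=; lia.
Qed.

Lemma sum_counts_w_states L : all (fun s => (s == 0) || (s == k.+1) || (s == K)) L ->
  \sum_(s <- L) acount_w s = (k + l) * count_mem K L + k * count_mem k.+1 L /\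
  \sum_(s <- L) bcount_w s = m.+1 * count_mem K L + count_mem k.+1 L.
Proof.
elim: L => [|s L IH] /=; first by rewrite !big_nil !muln0.
case/andP=> hs /IH[IHa IHb]; rewrite !big_cons IHa IHb acount_wE bcount_wE.
have [->|[->|->]] : s = 0 \/ s = k.+1 \/ s = K.
  by case/orP: hs => [/orP[]|] /eqP; [left | right; left | right; right].
all: rewrite /K /= ?eqxx; split; lia.
Qed.

(* For [t < j], the prefix of [Sword j] that stops inside its [t.+1]-st factor
   [X], right after the [b^m.+1]. *)
Definition Spre t : word := Shead ++ flatten (nseq t X) ++ pw la k ++ pw lb m.+1.

Lemma Spre_succ t : Spre t.+1 = Spre t ++ (pw la l ++ pw la k) ++ pw lb m.+1.
Proof. by rewrite /Spre flatten_nseqSr /X -!catA. Qed.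

Lemma Sword_Spre j t : t < j -> exists R, Sword j = Spre t ++ R.
Proof.
move=> htj; rewrite SwordE /Spre -(subnKC htj) nseqD flatten_cat flatten_nseqSr /X.
by eexists; rewrite -!catA.
Qed.

Lemma count_Spre t :
  acount (Spre t) = t.+2 * (k + l) + k /\ bcount (Spre t) = t.+2 * m.+1 + 1.
Proof.
have [ha hb] := count_Shead; have [ea eb] := count_Xs t.
rewrite /Spre; split; rewrite count_cat ?ha ?hb count_cat ?ea ?eb /pw count_cat !count_nseq /=.
all: lia.
Qed.

(* [zl] exhibits [Sword j] as a shuffle of [Sword i] (index 0) and of [d]
   inserted ("new") copies of [w]; [zl0] exhibits [Sword i] as a shuffle of [N]
   ("old") copies of [w].  The [states] record how far each copy is read at the
   [t]-th cut. *)
Section NoDerivation.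
Variables (i j d N : nat) (zl zl0 : seq (bool * nat)).
Hypotheses (hi : 0 < i) (hij : i < j).
Hypothesis Hj : labelling (Sword j) zl (Sword i :: nseq d w).
Hypothesis Hi : labelling (Sword i) zl0 (nseq N w).

Definition cut t := size (Spre t).
Definition cut_old t := consumed zl 0 (cut t).
Definition states_old t := [seq consumed zl0 y (cut_old t) | y <- iota 0 N].
Definition states_new t := [seq consumed zl x (cut t) | x <- iota 1 d].
Definition full_old t := count_mem K (states_old t).
Definition half_old t := count_mem k.+1 (states_old t).
Definition full_new t := count_mem K (states_new t).
Definition half_new t := count_mem k.+1 (states_new t).

Lemma nth_copies x : 0 < x <= d -> nth [::] (Sword i :: nseq d w) x = w.
Proof. by case: x => //= x hx; rewrite nth_nseq ifT. Qed.

Lemma take_cut t : t < j -> take (cut t) (Sword j) = Spre t.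
Proof. by case/Sword_Spre=> R ->; rewrite /cut take_size_cat. Qed.

Lemma count_take_cut_old c t : count_mem c (take (cut_old t) (Sword i)) =
  \sum_(s <- states_old t) count_mem c (take s w).
Proof.
rewrite (count_take_labelling c _ Hi) big_map size_nseq.
by apply: eq_big_seq => y; rewrite mem_iota /= => hy; rewrite nth_nseq hy.
Qed.

Lemma count_Spre_split c t : t < j -> count_mem c (Spre t) =
  count_mem c (take (cut_old t) (Sword i)) + \sum_(s <- states_new t) count_mem c (take s w).
Proof.
move=> ht; rewrite -take_cut // (count_take_labelling c _ Hj) big_map /= size_nseq.
rewrite big_cons; congr (_ + _); apply: eq_big_seq => x.
by rewrite mem_iota add1n ltnS => hx; rewrite nth_copies.
Qed.

Lemma states_le_K t : all (fun s => s <= K) (states_old t ++ states_new t).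
Proof.
rewrite all_cat; apply/andP; split; apply/allP => s /mapP[y]; rewrite mem_iota => hy ->.
  have := consumed_le_size y (cut_old t) Hi.
  by rewrite nth_nseq; case: ifP => _ /=; rewrite ?size_w //; lia.
by have := consumed_le_size y (cut t) Hj; rewrite nth_copies ?size_w //; lia.
Qed.

Lemma states_rigid t : t < j ->
  [/\ all (fun s => (s == 0) || (s == k.+1) || (s == K)) (states_old t ++ states_new t),
      full_old t + full_new t = t.+2 & half_old t + half_new t = 1].
Proof.
move=> ht; have [pa pb] := count_Spre t.
have hA : \sum_(s <- states_old t ++ states_new t) acount_w s = t.+1.+1 * (k + l) + k.
  by rewrite big_cat -pa (count_Spre_split la ht) count_take_cut_old.
have hB : \sum_(s <- states_old t ++ states_new t) bcount_w s = t.+1.+1 * m.+1 + 1.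
  by rewrite big_cat -pb (count_Spre_split lb ht) count_take_cut_old.
have [h1 h2 h3] := w_prefixes_rigid (states_le_K t) hA hB.
by split=> //; rewrite -count_cat.
Qed.

Lemma count_take_cut_oldE t : t < j ->
  bcount (take (cut_old t) (Sword i)) = m.+1 * full_old t + half_old t /\
  acount (take (cut_old t) (Sword i)) = (k + l) * full_old t + k * half_old t.
Proof.
case/states_rigid=> + _ _; rewrite all_cat => /andP[/sum_counts_w_states[sa sb] _].
by rewrite !count_take_cut_old.
Qed.

Lemma sum_bcount_new t : t < j ->
  \sum_(s <- states_new t) bcount (take s w) = m.+1 * full_new t + half_new t.
Proof.
case/states_rigid=> + _ _; rewrite all_cat => /andP[_ /sum_counts_w_states[_ ->]].
by [].
Qed.

Lemma cut_succ t : cut t.+1 = cut t + (l + k + m.+1).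
Proof. by rewrite /cut Spre_succ !size_cat /pw !size_nseq addnA. Qed.

Lemma states_step t : t.+1 < j ->
  [/\ m.+1 * full_old t + half_old t <= m.+1 * full_old t.+1 + half_old t.+1,
      m.+1 * full_new t + half_new t <= m.+1 * full_new t.+1 + half_new t.+1 &
      m.+1 * full_old t.+1 + half_old t.+1 + (m.+1 * full_new t.+1 + half_new t.+1) =
      m.+1 * full_old t + half_old t + (m.+1 * full_new t + half_new t) + m.+1].
Proof.
move=> ht; have ht' := ltnW ht.
have [b1 _] := count_take_cut_oldE ht'; have [b1' _] := count_take_cut_oldE ht.
have hcut : cut t <= cut t.+1 by rewrite cut_succ leq_addr.
split.
- by rewrite -b1 -b1' count_take_mono // consumed_mono.
- rewrite -!sum_bcount_new // !big_map big_seq_cond [leqRHS]big_seq_cond.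
  by apply: leq_sum => x _; apply: bcount_w_mono; apply/consumed_mono.
- have [_ pb] := count_Spre t; have [_ pb'] := count_Spre t.+1.
  rewrite -b1 -b1' -!sum_bcount_new //.
  move: (count_Spre_split lb ht') (count_Spre_split lb ht); rewrite pb pb'; lia.
Qed.

Lemma full_old_no_half t : t < j -> half_old t = 0 -> full_old t = 0 \/ full_old t = i.+3.
Proof.
move=> ht he; have [b a] := count_take_cut_oldE ht; rewrite he muln0 !addn0 in b a.
have [_ cb] := count_Sword i.
case: (posnP (cut_old t)) => [h0|hpos].
  by left; move: a; rewrite h0 take0 /=; nia.
case: (ltnP (cut_old t) (size (Sword i))) => hs.
  by have := @Sword_proper_prefix i (cut_old t); rewrite hpos hs a b => /(_ isT); nia.
by right; move: b; rewrite take_oversize // cb; nia.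
Qed.

Lemma full_old_half t : t < j -> half_old t = 1 -> full_old t != 1 /\ full_old t <= i.+1.
Proof.
move=> ht he; have [b a] := count_take_cut_oldE ht; rewrite he muln1 in b a.
have [hn1 hn2] := Sword_prefix_half_counts a b; split=> //.
have [_ cb] := count_Sword i; have := count_take_le lb (cut_old t) (Sword i).
by rewrite b cb; move: hn2; nia.
Qed.

Lemma full_new_le t : full_new t <= d.
Proof. by rewrite /full_new (leq_trans (count_size _ _)) // size_map size_iota. Qed.

Lemma new_copies_count : d = j - i.
Proof.
case: Hj => h1 h2 h3; have := count_labelling lb h2; rewrite h1 /= size_nseq big_cons h3 /=.
have -> : \sum_(x <- iota 1 d) count_mem lb (label_proj x zl) = \sum_(x <- iota 1 d) m.+1.
  apply: eq_big_seq => x; rewrite mem_iota add1n ltnS => hx; rewrite h3 nth_copies //.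
  by rewrite /w /pw !count_cat !count_nseq /=; lia.
rewrite big_const_seq count_predT size_iota iter_addn_0.
have [_ ->] := count_Sword j; have [_ ->] := count_Sword i; nia.
Qed.

(* Between the cuts [t] and [t.+1] the text is [a^(l+k) b^m.+1], in which no
   copy of [w] can read its factor [b a^l]. *)
Lemma new_copy_no_jump t x : t.+1 < j -> 0 < x <= d ->
  consumed zl x (cut t) = 0 -> consumed zl x (cut t.+1) != K.
Proof.
move=> ht hx h0; have [R hR] := Sword_Spre ht; rewrite Spre_succ in hR.
have hR1 : Sword j = Spre t ++ (pw la l ++ pw la k) ++ (pw lb m.+1 ++ R) by rewrite hR -!catA.
have hR2 : Sword j = (Spre t ++ (pw la l ++ pw la k)) ++ pw lb m.+1 ++ R by rewrite hR -!catA.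
pose mid := cut t + size (pw la l ++ pw la k).
have hb : bcount_w (consumed zl x mid) <= bcount_w 0.
  have := labelling_window x lb Hj hR1.
  by rewrite nth_copies // -h0 /pw count_cat !count_nseq addn0.
have ha : acount_w (consumed zl x (cut t.+1)) <= acount_w (consumed zl x mid).
  have := labelling_window x la Hj hR2; rewrite nth_copies // /pw !count_nseq addn0.
  suff -> : size (Spre t ++ (nseq l la ++ nseq k la)) + size (nseq m.+1 lb) = cut t.+1.
    by rewrite size_cat.
  by rewrite cut_succ /mid /cut !size_cat !size_nseq; lia.
apply/eqP => hK; move: ha hb; rewrite hK; move: (consumed zl x mid) => s.
by rewrite !acount_wE !bcount_wE /K; lia.
Qed.

Lemma full_new_no_jump t : t.+1 < j -> half_new t = 0 -> full_new t.+1 <= full_new t.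
Proof.
move=> ht he; rewrite leqNgt; apply/negP => /count_map_lt[x hx [hK hn]].
have [/allP hall _ _] := states_rigid (ltnW ht).
have hmem : consumed zl x (cut t) \in states_new t by apply: map_f.
have hnk : consumed zl x (cut t) != k.+1.
  by apply: contraTneq hmem => ->; rewrite -has_pred1 has_count -/(half_new t) he.
have hin : consumed zl x (cut t) \in states_old t ++ states_new t.
  by rewrite mem_cat hmem orbT.
have := hall _ hin; rewrite (negbTE hn) (negbTE hnk) !orbF => /eqP h0.
by move: hx; rewrite mem_iota add1n ltnS => hx; move: hK; apply/eqP/new_copy_no_jump.
Qed.

Lemma full_step_bounds t : t.+1 < j ->
  [/\ full_old t <= full_old t.+1, full_old t.+1 <= (full_old t).+1 &
      full_new t <= full_new t.+1].
Proof.
move=> ht; have [_ _ e] := states_rigid (ltnW ht); have [_ _ e'] := states_rigid ht.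
have [h1 h2 h3] := states_step ht; move: h1 h2 h3 e e'.
move: (full_old t) (full_old t.+1) (full_new t) (full_new t.+1).
move: (half_old t) (half_old t.+1) (half_new t) (half_new t.+1) => x x' y y' a a' b b'.
move=> h1 h2 h3 e e'; have ha : a <= a' by nia.
have hb : b <= b' by nia.
by split => //; nia.
Qed.

Lemma full_old_bounds_of_lt t : t < j -> full_old t < i.+3 ->
  full_old t != 1 /\ full_old t <= i.+1.
Proof.
move=> ht hlt; have [_ _ he] := states_rigid ht.
have [h0|h1] : half_old t = 0 \/ half_old t = 1 by lia.
  by have := full_old_no_half ht h0; lia.
exact: full_old_half.
Qed.

Lemma full_old_bounds t : t < j -> full_old t != 1 /\ full_old t <= i.+1.
Proof.
elim: t => [|t IH] ht; apply: full_old_bounds_of_lt => //.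
  by have [_ hu _] := states_rigid ht; lia.
by have [_ hs _] := full_step_bounds ht; have [_ hle] := IH (ltnW ht); lia.
Qed.

Lemma full_old_stays0 : full_old 0 = 0 -> forall t, t < j -> full_old t = 0.
Proof.
move=> h0; elim=> [//|t IH] ht.
have [_ hs _] := full_step_bounds ht; have [h1 _] := full_old_bounds ht.
by move: hs h1; rewrite IH ?(ltnW ht) //; lia.
Qed.

Lemma full_old_stays_ge2 : 2 <= full_old 0 -> forall t, t < j -> 2 <= full_old t.
Proof.
move=> h0; elim=> [//|t IH] ht.
by have [hs _ _] := full_step_bounds ht; apply: leq_trans (IH (ltnW ht)) hs.
Qed.

Lemma no_derivation : False.
Proof.
have hj : j.-1 < j by lia.
have [_ hu _] := states_rigid hj; have [_ hle] := full_old_bounds hj.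
have [_ hu0 _] := states_rigid (ltn_trans hi hij).
have [h0|h2] : full_old 0 = 0 \/ 2 <= full_old 0.
  by have [] := full_old_bounds (ltn_trans hi hij); lia.
  by move: hu (full_new_le j.-1); rewrite new_copies_count full_old_stays0 //; lia.
have no_half_new t : t < j -> half_new t = 0.
  move=> ht; have [_ _ he] := states_rigid ht; have [_ hi1] := full_old_bounds ht.
  have := full_old_stays_ge2 h2 ht.
  have [h|h] : half_old t = 0 \/ half_old t = 1 by lia.
    by have := full_old_no_half ht h; lia.
  by lia.
have new0 : forall t, t < j -> full_new t = 0.
  elim=> [_|t IH ht]; first by lia.
  have := full_new_no_jump ht (no_half_new t (ltnW ht)); rewrite IH ?(ltnW ht); lia.
by move: hu hle; rewrite new0 //; lia.
Qed.

End NoDerivation.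

End Words.

Theorem proposition3 (k l m : nat) (hkl : l < k) (hl : 1 <= l) (hm : 1 <= m) :
  let w : word := pw la k ++ [:: lb] ++ pw la l ++ pw lb m in
  let I := fun u : word => u = w in
  let S := fun n : nat =>
    pw la k ++ [:: lb] ++ pw la l ++ pw la k ++ [:: lb] ++ pw la l ++ pw lb m
    ++ flatten (nseq n (pw la k ++ pw lb m.+1 ++ pw la l))
    ++ pw la k ++ [:: lb] ++ pw la l ++ pw lb m ++ pw lb m in
  (forall n, 1 <= n -> Leps I (S n)) /\
  (forall i j, 1 <= i -> i < j -> ~ derives I (S i) (S j)) /\
  ~ wqo_on (Leps I) (derives I).
Proof.
move=> w0 I S.
have hS n : Leps I (S n) := derives_Sword k l m n.
have hnot i j : 1 <= i -> i < j -> ~ derives I (S i) (S j).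
  move=> hi hij hder.
  have [N [zl0 Hi]] := derives_labelling (hS i) (labelling_nil bool).
  have [d [zl Hj]] := derives_labelling hder (labelling_single (S i)).
  exact: (no_derivation hkl hl hm hi hij Hj Hi).
split=> [n _|]; first exact: hS.
split=> [|hwqo]; first exact: hnot.
have [i [j [hij hder]]] := hwqo (fun n => S n.+1) (fun n => hS n.+1).
exact: hnot i.+1 j.+1 isT hij hder.
Qed.
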